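(* Let $f_1,\ldots,f_k\in\mathbb{R}[X_1,\ldots,X_n]$ with $\deg f_i<d$ for all $i$, and suppose that the origin is not a solution of the system $f_1\ge 0,\ldots,f_k\ge 0$ and that the solution set $\{x\in\mathbb{R}^n: f_1(x)\ge0,\ldots,f_k(x)\ge 0\}$ is bounded. Let $D$ be the minimal even integer not less than $kd+1$ and, for a parameter $\varepsilon$, let $$g(\varepsilon)=\prod_{1\le i\le k}(f_i+\varepsilon)-\varepsilon^{k+1}\sum_{1\le j\le n}X_j^{D}.$$ If the system $f_1\ge 0,\ldots,f_k\ge 0$ has a solution in $\mathbb{R}^n$, then there is a solution $v'$ of it which is a limit of real roots of the system $\frac{\partial g(\varepsilon)}{\partial X_1}=\cdots=\frac{\partial g(\varepsilon)}{\partial X_n}=0$ as $\varepsilon\to 0^+$; that is, there are positive numbers $\varepsilon_j\to 0$ and points $v_j\in\mathbb{R}^n$ with $\frac{\partial g(\varepsilon_j)}{\partial X_l}(v_j)=0$ for all $1\le l\le n$ such that $v_j\to v'$. *)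

From HB Require Import structures.
From mathcomp Require Import all_boot all_order all_algebra.
From mathcomp Require Import reals.
From mathcomp Require Import mpoly.
Set Implicit Arguments. Unset Strict Implicit. Unset Printing Implicit Defensive.
Import Order.TTheory GRing.Theory Num.Theory.
Local Open Scope ring_scope.

Definition is_sol (R : realType) (n k : nat) (f : 'I_k -> {mpoly R[n]})
  (x : 'I_n -> R) : Prop := forall i : 'I_k, 0 <= (f i).@[x].

Definition bounded_set (R : realType) (n : nat) (S : ('I_n -> R) -> Prop) : Prop :=
  exists M : R, forall x, S x -> forall l : 'I_n, `|x l| <= M.

Definition min_even_ge (m : nat) : nat := if odd m then m.+1 else m.

Definition gpert (R : realType) (n k D : nat) (f : 'I_k -> {mpoly R[n]}) (eps : R)
  : {mpoly R[n]} :=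
  \prod_(i < k) (f i + eps%:MP) - (eps ^+ k.+1) *: \sum_(j < n) 'X_j ^+ D.

Definition cvg_seq (R : realType) (u : nat -> R) (a : R) : Prop :=
  forall e : R, 0 < e -> exists N : nat, forall j, (N <= j)%N -> `|u j - a| < e.

Definition cvg_vec (R : realType) (n : nat) (u : nat -> 'I_n -> R) (a : 'I_n -> R)
  : Prop := forall l : 'I_n, cvg_seq (fun j => u j l) (a l).

(* For eps > 0 maximise g(eps) over the compact set of points x with
   |x|_oo <= B and f_i(x) >= -eps for all i, where B exceeds the bound of the
   solution set by 1.  At a solution x0, g(eps)(x0) >= eps^k (1 - eps S) > 0
   with S = sum_j x0_j^D, once eps S < 1; since D is even, g(eps) <= 0
   wherever some f_i = -eps, so a maximiser satisfies every constraint
   strictly.  The maximisers have a cluster point v', which solves the system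
   because the constraints f_i >= -eps tighten to f_i >= 0 as eps -> 0; hence
   |v'|_oo <= B - 1, and maximisers closer than 1 to v' lie strictly inside
   the box.  Such a maximiser is a local maximum of g(eps) in R^n, where all
   partial derivatives vanish.  The box replaces the coercivity of g(eps) that
   D > k d gives in the paper. *)
From Pilot Require Import Defs.
From HB Require Import structures.
From mathcomp Require Import all_boot all_order all_algebra.
From mathcomp Require Import mpoly.
From mathcomp Require Import all_classical all_reals all_analysis.
From mathcomp Require Import lra.
(* Re-import so that [bounded_set] denotes the definition of Defs rather than
   the notation of mathcomp-analysis. *)
Import Pilot.Defs.
Import Order.TTheory GRing.Theory Num.Theory numFieldNormedType.Exports.
Local Open Scope classical_set_scope.
Local Open Scope ring_scope.

(* Points of R^n are row vectors ['rV[R]_n], which carry the sup-norm topology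
   of the library; [x ord0 : 'I_n -> R] is the underlying function. *)
Section MpolyCalculus.
Context {R : realFieldType} {n : nat}.
Implicit Types (p q : {mpoly R[n]}) (x : 'rV[R]_n).

Lemma mpoly_ring_ind (P : {mpoly R[n]} -> Prop) :
  (forall c, P c%:MP) -> (forall i, P 'X_i) ->
  (forall p q, P p -> P q -> P (p + q)) ->
  (forall p q, P p -> P q -> P (p * q)) ->
  forall p, P p.
Proof.
move=> PC PX PD PM p; elim/mpolyind: p => [|c m p _ _ Pp]; first by rewrite -mpolyC0.
apply: (PD) => //; rewrite -mul_mpolyC mpolyXE_id; apply: (PM) => //.
elim/big_rec: _ => [|i r _ Pr]; first by rewrite -mpolyC1.
apply: (PM) => //; elim: (m i) => [|e Pe]; first by rewrite expr0 -mpolyC1.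
by rewrite exprS; apply: (PM).
Qed.

Lemma continuous_meval p : continuous (fun x : 'rV[R]_n => p.@[x ord0]).
Proof.
elim/mpoly_ring_ind: p => [c|i|p q cp cq|p q cp cq] x.
- under eq_fun do rewrite mevalC; exact: cst_continuous.
- under eq_fun do rewrite mevalXU; exact: coord_continuous.
- under eq_fun do rewrite mevalD; exact: (continuousD (cp x) (cq x)).
- under eq_fun do rewrite mevalM; exact: (continuousM (cp x) (cq x)).
Qed.

Lemma meval_row p (v : 'I_n -> R) : p.@[(\row_i v i) ord0] = p.@[v].
Proof. by apply: meval_eq => i; rewrite mxE. Qed.

Lemma closed_meval_ge p (a : R) : closed [set y : 'rV[R]_n | a <= p.@[y ord0]].
Proof.
apply: (preimage_closed (f := fun y : 'rV[R]_n => p.@[y ord0]) (D := [set z | a <= z])).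
  by move=> y _; exact: continuous_meval.
exact: closed_ge.
Qed.

Lemma is_derive_affine (a b t : R) : is_derive t 1 (fun s : R => a + s * b) b.
Proof.
apply: (is_derive_eq (is_deriveD (f := cst a) (g := fun s : R => s * b) _ _)).
by rewrite scaler0 !add0r [_%:A]mulr1.
Qed.

Lemma is_derive_meval_line p x (l : 'I_n) (t : R) :
  is_derive t 1 (fun s => p.@[(x + s *: 'e_l) ord0])
    (mderiv l p).@[(x + t *: 'e_l) ord0].
Proof.
elim/mpoly_ring_ind: p t => [c|i|p q dp dq|p q dp dq] t.
- rewrite mderivC meval0; under eq_fun do rewrite mevalC; exact: is_derive_cst.
- under eq_fun do rewrite mevalXU !mxE eqxx /=.
  apply: is_derive_eq (is_derive_affine _ _ _) _.
  rewrite mderivX mnm1E mevalZ; have [->|_] := eqVneq i l; last by rewrite mul0r.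
  have -> : (U_(l) - U_(l) = 0)%MM by apply/mnmP => j; rewrite mnmBE subnn mnm0E.
  by rewrite mpolyX0 meval1 mulr1.
- rewrite mderivD mevalD; under eq_fun do rewrite mevalD.
  exact: (is_deriveD (dp t) (dq t)).
- rewrite mderivM mevalD !mevalM; under eq_fun do rewrite mevalM.
  apply: is_derive_eq (is_deriveM (dp t) (dq t)) _.
  by rewrite addrC mulrC.
Qed.

Lemma mderiv_meval_eq0_at_local_max p x :
  (\forall y \near x, p.@[(y : 'rV_n) ord0] <= p.@[x ord0]) ->
  forall l, (mderiv l p).@[x ord0] = 0.
Proof.
move=> x_max l; pose h s := p.@[(x + s *: 'e_l) ord0].
have x_line : x + 0 *: 'e_l = x by rewrite scale0r addr0.
have line_cvg : (fun s : R => x + s *: 'e_l) @ 0 --> x.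
  by rewrite -{2}x_line; exact: (cvgD (cvg_cst x) (@scalel_continuous _ _ 'e_l 0)).
have /nbhs_ballP[d /= d_gt0 h_le] : \forall s \near 0, h s <= h 0.
  by rewrite /h x_line; exact: line_cvg x_max.
have h_max s : s \in `]- d, d[ -> h s <= h 0.
  by rewrite in_itv /= -ltr_norml => sd; apply: h_le; rewrite /ball /= sub0r normrN.
have dh (t : R) : is_derive t 1 h (mderiv l p).@[(x + t *: 'e_l) ord0].
  exact: is_derive_meval_line.
have h_derivable t : t \in `]- d, d[ -> derivable h t 1.
  by move=> _; apply: ex_derive; apply: dh.
have d_ge : - d <= d by lra.
have mem0 : (0 : R) \in `]- d, d[ by rewrite in_itv /= oppr_lt0 d_gt0.
have dh0 := derive1_at_max d_ge h_derivable mem0 h_max.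
by rewrite -x_line -(derive_val (is_derive := dh 0)) (derive_val (is_derive := dh0)).
Qed.

End MpolyCalculus.

Lemma exists_meval_max {R : realType} {n : nat} (p : {mpoly R[n]})
    {A : set 'rV[R]_n} :
  compact A -> A !=set0 ->
  exists c, A c /\ forall y, A y -> p.@[y ord0] <= p.@[c ord0].
Proof.
move=> A_compact A_ne.
have [|c /set_mem Ac c_max] := EVT_max_rV (f := fun y => p.@[y ord0]) A_ne A_compact.
  exact/continuous_subspaceT/continuous_meval.
by exists c; split=> // y Ay; apply: c_max; rewrite inE.
Qed.

Lemma cvg_seq_le_inv {R : realType} (u : nat -> R) (a : R) :
  (forall j, `|u j - a| <= j.+1%:R^-1) -> cvg_seq u a.
Proof.
move=> u_a e e_gt0; exists (Num.bound e^-1) => j bj.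
have einv_ge0 : 0 <= e^-1 by rewrite invr_ge0 ltW.
apply: (le_lt_trans (u_a j)); rewrite invf_plt ?posrE ?ltr0n //.
apply: (lt_le_trans (archi_boundP einv_ge0)).
by rewrite ler_nat (leq_trans bj).
Qed.

Lemma ball_normr_lt {R : numFieldType} {V : normedModType R} {a y : V} {r : R} :
  ball a r y -> `|y| < `|a| + r.
Proof.
rewrite -ball_normE /= => ay; rewrite -(subrKC a y) (le_lt_trans (ler_normD _ _)) //.
by rewrite ltrD2l distrC.
Qed.

Lemma cluster_seq_subseq_ball {R : numFieldType} {T : pseudoMetricType R}
    {u : nat -> T} {a : T} :
  cluster (u @ \oo) a ->
  exists phi : nat -> nat, forall m, (m <= phi m)%N /\ ball a m.+1%:R^-1 (u (phi m)).
Proof.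
move=> a_clu.
suff /choice[phi phiP] : forall m, exists j, (m <= j)%N /\ ball a m.+1%:R^-1 (u j).
  by exists phi.
move=> m; have tail_m : (u @ \oo) [set y | exists2 j, (m <= j)%N & y = u j].
  by exists m => // j /= mj; exists j.
have r_gt0 : 0 < m.+1%:R^-1 :> R by rewrite invr_gt0.
have [_ [[j mj ->] uj]] := a_clu _ _ tail_m (nbhsx_ballx a _ r_gt0).
by exists j.
Qed.

Lemma closed_cluster {T : topologicalType} {F : set_system T} {C : set T} :
  closed C -> F C -> cluster F `<=` C.
Proof.
move=> /closure_id C_closure FC a; rewrite clusterE => /(_ C FC).
by rewrite -C_closure.
Qed.

Section RowNorm.
Context {R : realType} {n : nat}.
Implicit Types (x : 'rV[R]_n).

Lemma rV_normr_entry x i : `|x ord0 i| <= `|x|.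
Proof.
change (`|x ord0 i| <= mx_norm x); rewrite mx_normrE.
exact: (le_bigmax _ (fun ij : 'I_1 * 'I_n => `|x ij.1 ij.2|) (ord0, i)).
Qed.

Lemma rV_normr_le x (M : R) : 0 <= M -> (forall i, `|x ord0 i| <= M) -> `|x| <= M.
Proof.
move=> M_ge0 xM; change (mx_norm x <= M); rewrite mx_normrE.
by apply: bigmax_le => // -[a i] _; rewrite (ord1 a).
Qed.

Lemma closed_normr_le (B : R) : closed [set x : 'rV[R]_n | `|x| <= B].
Proof.
apply: (preimage_closed (f := fun x : 'rV[R]_n => `|x|) (D := [set y : R | y <= B])).
  by move=> x _; exact: norm_continuous.
exact: closed_le.
Qed.

Lemma compact_sub_normr_le {A : set 'rV[R]_n} {B : R} :
  closed A -> A `<=` [set x | `|x| <= B] -> compact A.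
Proof.
move=> A_closed AB; apply: bounded_closed_compact => //.
exists B; split; first exact: num_real.
by move=> M BM x /AB /= xB; rewrite (le_trans xB) // ltW.
Qed.

Lemma exists_cluster_normr_le {u : nat -> 'rV[R]_n} {B : R} :
  (forall j, `|u j| <= B) -> exists a, cluster (u @ \oo) a.
Proof.
move=> uB; have K_compact : compact [set x : 'rV[R]_n | `|x| <= B].
  exact: compact_sub_normr_le (closed_normr_le B) (@subset_refl _ _).
have u_K : (u @ \oo) [set x | `|x| <= B] by exists 0%N => // j _; exact: uB.
by have [a [_ a_clu]] := K_compact _ _ u_K; exists a.
Qed.

Lemma cvg_vec_of_ball (u : nat -> 'rV[R]_n) (a : 'rV[R]_n) :
  (forall m, ball a m.+1%:R^-1 (u m)) -> cvg_vec (fun m => u m ord0) (a ord0).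
Proof.
move=> u_a l; apply: cvg_seq_le_inv => m; have := u_a m.
rewrite -ball_normE /= distrC => /ltW; apply: le_trans.
by have := rV_normr_entry (u m - a) l; rewrite !mxE.
Qed.

End RowNorm.

Lemma min_even_ge_even m : ~~ odd (min_even_ge m).
Proof. by rewrite /min_even_ge; case: ifP => /= ->. Qed.

(* For S = sum_j x0_j^D this makes eps S < 1, so that g(eps) is positive at
   the solution x0. *)
Definition eps_seq {R : realType} (S : R) (j : nat) : R := (j.+1%:R + S)^-1.

Section PerturbationScale.
Context {R : realType} {S : R}.
Hypothesis S_ge0 : 0 <= S.

Lemma eps_seq_gt0 j : 0 < eps_seq S j.
Proof. by rewrite invr_gt0 ltr_wpDr. Qed.

Lemma eps_seq_mul_lt1 j : eps_seq S j * S < 1.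
Proof.
have S_lt : S < j.+1%:R + S by rewrite ltrDr.
by rewrite mulrC ltr_pdivrMr ?mul1r // (le_lt_trans S_ge0 S_lt).
Qed.

Lemma cvg_eps_seq_comp (phi : nat -> nat) :
  (forall m, (m <= phi m)%N) -> cvg_seq (eps_seq S \o phi) 0.
Proof.
move=> phi_ge; apply: cvg_seq_le_inv => m /=.
rewrite subr0 gtr0_norm ?eps_seq_gt0 // lef_pV2 ?posrE ?ltr_wpDr //.
by rewrite ler_wpDr // ler_nat ltnS phi_ge.
Qed.

End PerturbationScale.

Section Perturbation.
Context {R : realType} {n k D : nat} (f : 'I_k -> {mpoly R[n]}).
Hypothesis D_even : ~~ odd D.

Lemma meval_gpert eps (x : 'I_n -> R) : (gpert D f eps).@[x] =
  \prod_(i < k) ((f i).@[x] + eps) - eps ^+ k.+1 * \sum_(j < n) x j ^+ D.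
Proof.
rewrite /gpert mevalB mevalZ rmorph_prod raddf_sum /=.
congr (_ - _ * _); first by apply: eq_bigr => i _; rewrite mevalD mevalC.
by apply: eq_bigr => j _; rewrite rmorphXn /= mevalXU.
Qed.

Lemma meval_gpert_gt0 eps (x : 'I_n -> R) :
  is_sol f x -> 0 < eps -> eps * \sum_(j < n) x j ^+ D < 1 ->
  0 < (gpert D f eps).@[x].
Proof.
move=> x_sol eps_gt0 eps_small; rewrite meval_gpert exprS.
have prod_ge : eps ^+ k <= \prod_(i < k) ((f i).@[x] + eps).
  rewrite -[k in eps ^+ k]card_ord -prodr_const; apply: ler_prod => i _.
  by rewrite ltW //= lerDr x_sol.
have epsk_gt0 : 0 < eps ^+ k by rewrite exprn_gt0.
nra.
Qed.

Lemma meval_gpert_le0 i eps (x : 'I_n -> R) :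
  0 <= eps -> (f i).@[x] = - eps -> (gpert D f eps).@[x] <= 0.
Proof.
move=> eps_ge0 fi_eps.
rewrite meval_gpert (bigD1 i) //= fi_eps addNr mul0r sub0r oppr_le0.
by rewrite mulr_ge0 ?exprn_ge0 ?sumr_ge0 // => j _; exact: exprn_even_ge0.
Qed.

Definition relaxed_sol (eps B : R) : set 'rV[R]_n :=
  [set y | `|y| <= B] `&` \bigcap_i [set y : 'rV_n | - eps <= (f i).@[y ord0]].

Lemma relaxed_sol_row eps B (x : 'I_n -> R) :
  is_sol f x -> 0 <= eps -> `|\row_i x i : 'rV[R]_n| <= B ->
  relaxed_sol eps B (\row_i x i).
Proof.
move=> x_sol eps_ge0 xB; split=> // i _ /=.
by rewrite meval_row (le_trans _ (x_sol i)) // oppr_le0.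
Qed.

Lemma compact_relaxed_sol eps B : compact (relaxed_sol eps B).
Proof.
apply: (compact_sub_normr_le (B := B)); last by move=> y [].
apply: closedI; first exact: closed_normr_le.
by apply: closed_bigI => i _; exact: closed_meval_ge.
Qed.

Lemma nbhs_relaxed_sol eps B (c : 'rV[R]_n) :
  `|c| < B -> (forall i, - eps < (f i).@[c ord0]) -> nbhs c (relaxed_sol eps B).
Proof.
move=> cB c_strict; apply: filterI.
  exact: (cvgr_le _ (@norm_continuous _ _ c) _ cB).
have near_ge : \forall y \near c, forall i, - eps <= (f i).@[(y : 'rV_n) ord0].
  apply: (@filter_forall _ _ _ _ (nbhs_filter c)) => i.
  exact: (cvgr_ge _ (continuous_meval (f i) c) _ (c_strict i)).
by apply: (filterS _ near_ge) => y + i _; apply.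
Qed.

(* A positive maximum satisfies the constraints strictly, by meval_gpert_le0,
   so the relaxed solution set is a neighbourhood of it. *)
Lemma mderiv_gpert_eq0_at_max {eps B : R} {c : 'rV[R]_n} :
  0 <= eps -> relaxed_sol eps B c -> `|c| < B -> 0 < (gpert D f eps).@[c ord0] ->
  (forall y, relaxed_sol eps B y ->
    (gpert D f eps).@[y ord0] <= (gpert D f eps).@[c ord0]) ->
  forall l, (mderiv l (gpert D f eps)).@[c ord0] = 0.
Proof.
move=> eps_ge0 [_ c_ge] cB g_gt0 c_max; apply: mderiv_meval_eq0_at_local_max.
apply: (filterS c_max); apply: nbhs_relaxed_sol => // i.
rewrite lt_def c_ge // andbT; apply: contraTneq g_gt0 => fi_eps.
by rewrite -leNgt (meval_gpert_le0 i _ _ eps_ge0 fi_eps).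
Qed.

Lemma cluster_relaxed_sol_is_sol {eps : nat -> R} {B : R}
    {c : nat -> 'rV[R]_n} {a} :
  cvg_seq eps 0 -> (forall j, relaxed_sol (eps j) B (c j)) ->
  cluster (c @ \oo) a -> is_sol f (a ord0).
Proof.
move=> eps0 c_rel a_clu i; apply/ler_addgt0Pr => e e_gt0; rewrite -lerBlDr sub0r.
apply: (@closed_cluster _ (c @ \oo) _ (closed_meval_ge (f i) (- e)) _ a a_clu).
have [N epsN] := eps0 e e_gt0; exists N => // j /epsN; rewrite subr0 => eps_e /=.
have [_ /(_ i I) c_ge] := c_rel j.
by apply: le_trans c_ge; rewrite lerN2 ltW // (le_lt_trans (ler_norm _)).
Qed.

End Perturbation.

Theorem lemma5p1 (R : realType) (n k d : nat) (f : 'I_k -> {mpoly R[n]})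
  (hdeg : forall i : 'I_k, (msize (f i) <= d)%N)
  (h0 : ~ is_sol f (fun _ => 0))
  (hbdd : bounded_set (is_sol f))
  (hsol : exists x, is_sol f x) :
  let D := min_even_ge (k * d + 1) in
  exists v' : 'I_n -> R, is_sol f v' /\
    exists (eps : nat -> R) (v : nat -> 'I_n -> R),
      (forall j, 0 < eps j) /\ cvg_seq eps 0 /\
      (forall j (l : 'I_n), (mderiv l (gpert D f (eps j))).@[v j] = 0) /\
      cvg_vec v v'.
Proof.
move=> D; have D_even := min_even_ge_even (k * d + 1).
have [x0 x0_sol] := hsol; have [M M_bound] := hbdd.
have sol_norm (x : 'rV[R]_n) : is_sol f (x ord0) -> `|x| <= `|M|.
  move=> x_sol; apply: rV_normr_le => // i.
  by rewrite (le_trans (M_bound _ x_sol i)) ?ler_norm.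
pose B : R := `|M| + 1; pose X0 : 'rV[R]_n := \row_i x0 i.
have X0_sol : is_sol f (X0 ord0) by move=> i; rewrite meval_row.
have S_ge0 : 0 <= \sum_(j < n) x0 j ^+ D.
  by apply: sumr_ge0 => j _; exact: exprn_even_ge0.
pose eps := eps_seq (\sum_(j < n) x0 j ^+ D).
have eps_gt0 j : 0 < eps j := eps_seq_gt0 S_ge0 j.
have X0_rel j : relaxed_sol f (eps j) B X0.
  apply: relaxed_sol_row => //; first exact: ltW.
  by rewrite (le_trans (sol_norm _ X0_sol)) ?lerDl.
have g_X0_gt0 j : 0 < (gpert D f (eps j)).@[X0 ord0].
  by rewrite meval_row meval_gpert_gt0 ?eps_seq_mul_lt1.
have /choice[c c_max] j := exists_meval_max (gpert D f (eps j))
  (compact_relaxed_sol f (eps j) B) (ex_intro _ _ (X0_rel j)).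
have [a a_clu] := exists_cluster_normr_le (fun j => (c_max j).1.1).
have a_sol := cluster_relaxed_sol_is_sol f
  (cvg_eps_seq_comp S_ge0 id (fun=> leqnn _)) (fun j => (c_max j).1) a_clu.
have [phi phi_ball] := cluster_seq_subseq_ball a_clu.
exists (a ord0); split => //; exists (eps \o phi), (fun m => c (phi m) ord0).
split; first by move=> m; exact: eps_gt0.
split; first by apply: (cvg_eps_seq_comp S_ge0) => m; case: (phi_ball m).
split; last by apply: cvg_vec_of_ball => m; case: (phi_ball m).
move=> m l; have [_ c_near] := phi_ball m; have [c_rel c_argmax] := c_max (phi m).
apply: (mderiv_gpert_eq0_at_max f D_even (ltW (eps_gt0 _)) c_rel _ _ c_argmax).
  apply: (lt_le_trans (ball_normr_lt c_near)).
  by rewrite lerD ?sol_norm // invf_le1 ?ler1n ?ltr0n.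
exact: lt_le_trans (g_X0_gt0 _) (c_argmax _ (X0_rel _)).
Qed.
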